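(* Let $k \in \mathbb{N}$. For every $n \in \mathbb{N}$ and all integers $h, t$ with $0 \le h \le k-1$ and $1 \le t \le F_n$: (i) $a_{k(F_{n+1}-1)+hF_n+t+1} = kF_{n+2} - k + 1 + hF_{n+1} + \lfloor (F_{n+1}+1+t)\varphi \rfloor - \lfloor (F_{n+1}+1)\varphi \rfloor$; (ii) $b_{k(F_{n+1}-1)+hF_n+t+1} = kF_{n+3} + hF_{n+2} - k + t + 2 + \lfloor (F_{n+1}+1+t)\varphi \rfloor - \lfloor (F_{n+1}+1)\varphi \rfloor$, where $\varphi = \frac{1+\sqrt{5}}{2}$.
   Context: Fibonacci numbers: $F_1 = F_2 = 1$, $F_{i+2} = F_{i+1} + F_i$. Let $\sigma$ be the substitution on finite sequences over $\{1,2\}$ replacing each entry $1$ by $2$ and each entry $2$ by $2,1$. Let $C_{1,1} = (1)$, $C_{i+1,1} = \sigma(C_{i,1})$. For fixed $k \in \mathbb{N}$ and $i \in \mathbb{N}$, let $C_i^{(k)}$ be the concatenation of $k$ copies of $C_{i,1}$. Let $(c_n)_{n \in \mathbb{N}}$ be the infinite sequence obtained by concatenating $C_1^{(k)}, C_2^{(k)}, C_3^{(k)}, \dots$ in order, and let $d_n = c_n + 1$. Define $a_1 = k+1$, $a_n = k+1 + \sum_{i=1}^{n-1} c_i$, and $b_1 = 2k+2$, $b_n = 2k+2 + \sum_{i=1}^{n-1} d_i$ for $n \in \mathbb{N}$. *)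

From mathcomp Require Import all_boot all_order all_algebra.
From mathcomp Require Import reals.
Set Implicit Arguments. Unset Strict Implicit. Unset Printing Implicit Defensive.
Import Order.TTheory GRing.Theory Num.Theory.

(* Fibonacci: fib 1 = fib 2 = 1 (fib 0 = 0 is only an auxiliary value). *)
Fixpoint fib (n : nat) : nat :=
  match n with
  | 0 => 0
  | 1 => 1
  | (m.+1 as p).+1 => fib p + fib m
  end.

Definition sigma_sub (s : seq nat) : seq nat :=
  flatten [seq (if x == 1 then [:: 2] else [:: 2; 1]) | x <- s].

(* C_{i,1}, i >= 1: C_{1,1} = (1), C_{i+1,1} = sigma(C_{i,1}). *)
Definition C1 (i : nat) : seq nat := iter i.-1 sigma_sub [:: 1].

Definition Ck (k i : nat) : seq nat := flatten (nseq k (C1 i)).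

Definition cprefix (k m : nat) : seq nat := flatten [seq Ck k i | i <- iota 1 m].

(* c_n (1-indexed): entry n of the infinite concatenation. Since every
   block is nonempty (for k >= 1), the first n blocks have length >= n. *)
Definition cseq (k n : nat) : nat := nth 0 (cprefix k n) n.-1.

Definition dseq (k n : nat) : nat := (cseq k n).+1.

Definition a_seq (k n : nat) : nat := k.+1 + \sum_(1 <= i < n) cseq k i.
Definition b_seq (k n : nat) : nat := (2 * k + 2) + \sum_(1 <= i < n) dseq k i.

Local Open Scope ring_scope.
Definition phi (R : realType) : R := (1 + Num.sqrt 5) / 2.

(* The first t letters of C_{n,1} sum to floor((t+1) phi) - 1, since C_{n+2,1} is
   C_{n+1,1} ++ C_{n,1} and floor((F_{n+1} + m) phi) = F_{n+2} + floor(m phi) for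
   1 <= m <= F_n + 1.  The latter holds because e := F_{n+1} phi - F_{n+2} satisfies
   |e| (F_n + F_{n+1} phi) = 1 (Cassini), whereas for an integer p next to m phi the
   product (p - m phi)(p - m (1 - phi)) = p^2 - p m - m^2 is a nonzero integer, so
   m phi is farther than |e| from p.  The index in the statement lies in the block
   C_n^{(k)}, after h copies of C_{n,1} and t letters of the next one, so a and b
   are Fibonacci sums plus such a partial sum. *)

From mathcomp Require Import all_boot all_order all_algebra.
From mathcomp Require Import reals.
From mathcomp Require Import ring lra zify.
Import Order.TTheory GRing.Theory Num.Theory.

Lemma fibSS n : fib n.+2 = fib n.+1 + fib n.
Proof. by []. Qed.

Lemma fib_gt0 n : 0 < fib n.+1.
Proof. by elim: n => [|[|n] IH] //; rewrite fibSS addn_gt0 IH. Qed.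

Lemma fib_ge n : n.+1 <= fib n.+2.
Proof. by elim: n => // n IH; rewrite fibSS; have := fib_gt0 n; lia. Qed.

Lemma fib_shiftE (u : nat -> nat) d :
  u 1 = fib d.+1 -> u 2 = fib d.+2 -> (forall i, u i.+3 = u i.+2 + u i.+1) ->
  forall i, u i.+1 = fib (i + d).+1.
Proof.
move=> u1 u2 uS i; suff [] : u i.+1 = fib (i + d).+1 /\ u i.+2 = fib (i + d).+2 by [].
by elim: i => [|i [IH1 IH2]]; rewrite ?uS ?IH1 ?IH2 ?addSn.
Qed.

Lemma sigma_sub_cat s1 s2 : sigma_sub (s1 ++ s2) = sigma_sub s1 ++ sigma_sub s2.
Proof. by rewrite /sigma_sub map_cat flatten_cat. Qed.

Lemma C1_rec i : C1 i.+3 = C1 i.+2 ++ C1 i.+1.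
Proof.
elim: i => [//|i IH].
by rewrite (_ : C1 i.+4 = sigma_sub (C1 i.+3)) // {1}IH sigma_sub_cat.
Qed.

Lemma size_C1 i : size (C1 i.+1) = fib i.+1.
Proof.
by rewrite (@fib_shiftE (fun j => size (C1 j)) 0) ?addn0 // => j; rewrite C1_rec size_cat.
Qed.

Lemma sumn_C1 i : sumn (C1 i.+1) = fib i.+2.
Proof.
by rewrite (@fib_shiftE (fun j => sumn (C1 j)) 1) ?addn1 // => j; rewrite C1_rec sumn_cat.
Qed.

Lemma size_flatten_nseq T h (s : seq T) : size (flatten (nseq h s)) = h * size s.
Proof. by rewrite size_flatten /shape map_nseq sumn_nseq mulnC. Qed.

Lemma sumn_flatten_nseq h s : sumn (flatten (nseq h s)) = h * sumn s.
Proof. by rewrite sumn_flatten map_nseq sumn_nseq mulnC. Qed.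

Lemma cprefixD k m d :
  cprefix k (m + d) = cprefix k m ++ flatten [seq Ck k i | i <- iota m.+1 d].
Proof. by rewrite /cprefix iotaD map_cat flatten_cat. Qed.

Lemma cprefixS k m : cprefix k m.+1 = cprefix k m ++ Ck k m.+1.
Proof. by rewrite -[in LHS]addn1 cprefixD /= cats0. Qed.

Lemma size_cprefix k m : size (cprefix k m) + k = k * fib m.+2.
Proof.
elim: m => [|m IH]; first by rewrite /= muln1.
by rewrite cprefixS size_cat size_flatten_nseq size_C1 addnAC IH -mulnDr.
Qed.

Lemma sumn_cprefix k m : sumn (cprefix k m) + 2 * k = k * fib m.+3.
Proof.
elim: m => [|m IH]; first by rewrite /= mulnC.
by rewrite cprefixS sumn_cat sumn_flatten_nseq sumn_C1 addnAC IH -mulnDr.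
Qed.

Lemma size_cprefix_ge k m : 0 < k -> m <= size (cprefix k m).
Proof.
move=> k_gt0; have := size_cprefix k m.
case: m => // m; have := fib_ge m.+1; nia.
Qed.

Lemma nth_cprefix_le k M N i : M <= N -> i < size (cprefix k M) ->
  nth 0 (cprefix k N) i = nth 0 (cprefix k M) i.
Proof. by move=> /subnKC <- i_lt; rewrite cprefixD nth_cat i_lt. Qed.

Lemma cseq_nth k N i : 0 < k -> i < size (cprefix k N) ->
  cseq k i.+1 = nth 0 (cprefix k N) i.
Proof.
move=> k_gt0 i_lt; rewrite /cseq /=.
have [iN|Ni] := leqP i.+1 N; last by rewrite (@nth_cprefix_le k N) // ltnW.
by rewrite (@nth_cprefix_le k i.+1) // (leq_trans _ (@size_cprefix_ge k i.+1 k_gt0)).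
Qed.

Lemma sumn_take_nth (s : seq nat) L : L <= size s ->
  sumn (take L s) = \sum_(0 <= i < L) nth 0 s i.
Proof.
move=> L_le; rewrite sumnE (big_nth 0) size_takel //.
by apply: eq_big_nat => i /andP[_ iL]; rewrite nth_take.
Qed.

Lemma sum_cseq k N L : 0 < k -> L <= size (cprefix k N) ->
  \sum_(1 <= i < L.+1) cseq k i = sumn (take L (cprefix k N)).
Proof.
move=> k_gt0 L_le; rewrite sumn_take_nth // big_add1 /=.
by apply: eq_big_nat => i /andP[_ iL]; rewrite (@cseq_nth k N) // (leq_trans iL).
Qed.

Lemma take_cprefixS k n h t : h < k -> t <= fib n.+1 ->
  take (size (cprefix k n) + (h * fib n.+1 + t)) (cprefix k n.+1) =
  cprefix k n ++ flatten (nseq h (C1 n.+1)) ++ take t (C1 n.+1).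
Proof.
move=> hk t_le; rewrite cprefixS.
have -> : Ck k n.+1 =
    flatten (nseq h (C1 n.+1)) ++ C1 n.+1 ++ flatten (nseq (k - h.+1) (C1 n.+1)).
  by rewrite /Ck -{1}(subnKC hk) addSnnS nseqD flatten_cat.
rewrite take_cat ifN ?addKn -?leqNgt ?leq_addr //.
rewrite take_cat ifN ?size_flatten_nseq ?size_C1 ?addKn -?leqNgt ?leq_addr //.
by rewrite takel_cat ?size_C1.
Qed.

Lemma a_seq_block k n h t : 0 < k -> h < k -> t <= fib n.+1 ->
  a_seq k (size (cprefix k n) + h * fib n.+1 + t).+1
  = k.+1 + sumn (cprefix k n) + h * fib n.+2 + sumn (take t (C1 n.+1)).
Proof.
move=> k_gt0 hk t_le; rewrite /a_seq -addnA (@sum_cseq k n.+1) //.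
  by rewrite take_cprefixS // !sumn_cat sumn_flatten_nseq sumn_C1 !addnA.
rewrite cprefixS size_cat size_flatten_nseq size_C1 leq_add2l.
by rewrite (leq_trans (leq_add (leqnn _) t_le)) // -mulSnr leq_mul2r hk orbT.
Qed.

Lemma b_seqE k n : b_seq k n.+1 = a_seq k n.+1 + k.+1 + n.
Proof.
rewrite /b_seq /a_seq /dseq.
under eq_bigr do rewrite -addn1.
by rewrite big_split /= sum_nat_const_nat subSS subn0 muln1; lia.
Qed.

Lemma sqr_neq_5sqr a b : 0 < b -> a * a != 5 * (b * b).
Proof.
move=> b_gt0; apply/eqP=> eq_ab.
have a_gt0 : 0 < a by case: a eq_ab => // /esym /eqP; rewrite !muln_eq0; lia.
have := congr1 (logn 5) eq_ab.
by rewrite !lognM ?muln_gt0 ?a_gt0 ?b_gt0 // (@logn_prime 5 5 isT) eqxx; lia.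
Qed.

Local Open Scope ring_scope.

(* The norm of p - m phi in Z[phi]. *)
Definition zphi_norm (p m : int) : int := p ^+ 2 - p * m - m ^+ 2.

Lemma zphi_norm_neq0 (p m : int) : m != 0 -> zphi_norm p m != 0.
Proof.
move=> m_neq0; apply/eqP=> norm0.
have : (2 * p - m) * (2 * p - m) = 5 * (m * m) + 4 * zphi_norm p m.
  by rewrite /zphi_norm; ring.
rewrite norm0 mulr0 addr0 => /(congr1 absz); rewrite !abszM => /eqP.
by apply/negP/sqr_neq_5sqr; rewrite absz_gt0.
Qed.

Lemma cassini n : zphi_norm (fib n.+1) (fib n) = (-1) ^+ n.
Proof.
elim: n => [//|n IH].
by rewrite fibSS PoszD exprS -IH /zphi_norm; ring.
Qed.

Section GoldenRatio.
Variable R : realType.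
Local Notation ph := (phi R).

Lemma sqrt5_sqr : Num.sqrt (5 : R) ^+ 2 = 5.
Proof. by rewrite sqr_sqrtr // ler0n. Qed.

Lemma phi_sqr : ph ^+ 2 = ph + 1.
Proof.
rewrite /phi; have := sqrt5_sqr; set s := Num.sqrt 5 => s5.
have -> : ((1 + s) / 2) ^+ 2 = (1 + 2 * s + s ^+ 2) / 4 by field.
by rewrite s5; field.
Qed.

Lemma phi_bounds : 8 / 5 <= ph /\ ph < 33 / 20.
Proof.
have s_ge0 : 0 <= Num.sqrt (5 : R) := sqrtr_ge0 _.
rewrite /phi; move: sqrt5_sqr s_ge0; set s := Num.sqrt 5 => s5 s_ge0.
by split; nra.
Qed.

Lemma zphi_normE (p m : int) :
  (p%:~R - m%:~R * ph) * (p%:~R - m%:~R * (1 - ph)) = (zphi_norm p m)%:~R.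
Proof.
rewrite /zphi_norm rmorphB rmorphB /= !rmorphXn !rmorphM /=.
have := phi_sqr; set x := ph => x2.
apply/eqP; rewrite -subr_eq0; apply/eqP.
by transitivity (- m%:~R ^+ 2 * (x ^+ 2 - x - 1)); [ring | rewrite x2; ring].
Qed.

Lemma conj_norm_ge1 (p m : int) : m != 0 ->
  1 <= `|p%:~R - m%:~R * ph| * `|p%:~R - m%:~R * (1 - ph)|.
Proof.
move=> m_neq0; rewrite -normrM zphi_normE norm_intr_ge1 ?intr_int //.
by rewrite intr_eq0 zphi_norm_neq0.
Qed.

Lemma fib_phi_err n :
  `|(fib n.+1)%:R * ph - (fib n.+2)%:R| * ((fib n)%:R + (fib n.+1)%:R * ph) = 1.
Proof.
have [ph_lb _] := phi_bounds.
have pos : 0 < (fib n)%:R + (fib n.+1)%:R * ph :> R.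
  by rewrite ltr_wpDl // mulr_gt0 ?ltr0n ?fib_gt0 //; lra.
rewrite -(gtr0_norm pos) -normrM.
have -> : ((fib n.+1)%:R * ph - (fib n.+2)%:R) * ((fib n)%:R + (fib n.+1)%:R * ph)
    = - (zphi_norm (fib n.+2) (fib n.+1))%:~R.
  by rewrite -zphi_normE -!pmulrn fibSS natrD; ring.
by rewrite normrN cassini rmorphXn normrX normrN1 expr1n.
Qed.

Lemma floorD_small (x e : R) :
  `|e| < x - (Num.floor x)%:~R -> `|e| < (Num.floor x + 1)%:~R - x ->
  Num.floor (x + e) = Num.floor x.
Proof.
rewrite !ltr_norml => /andP[lb _] /andP[_ ub].
by apply: floor_def; apply/andP; split; lra.
Qed.

Lemma lt_dist_mulphi (p : int) (m : nat) (e z : R) : (0 < m)%N ->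
  `|e| * z = 1 -> `|p%:~R - m%:R * (1 - ph)| < z -> `|e| < `|p%:~R - m%:R * ph|.
Proof.
move=> m_gt0 ez yz; have := @conj_norm_ge1 p m (lt0n_neq0 m_gt0).
rewrite -!pmulrn; set y := `|_ - _ * (1 - ph)| in yz * => ge1.
have y_ge0 : 0 <= y := normr_ge0 _.
have e_ge0 : 0 <= `|e| := normr_ge0 _.
have y_gt0 : 0 < y.
  by rewrite lt_def y_ge0 andbT; apply: contraTneq ge1 => ->; rewrite mulr0 ler10.
have e_gt0 : 0 < `|e| by nra.
have : 0 < `|e| * (z - y) by rewrite mulr_gt0 // subr_gt0.
nra.
Qed.

Lemma conj_lt_fib (n m : nat) (p : R) : (3 <= n)%N -> (0 < m <= fib n.+1 + 1)%N ->
  m%:R * ph - 1 < p <= m%:R * ph + 1 ->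
  `|p - m%:R * (1 - ph)| < (fib n.+1)%:R + (fib n.+2)%:R * ph.
Proof.
move=> n_ge3 /andP[m_gt0 m_le] /andP[p_lb p_ub]; have [ph_lb ph_ub] := phi_bounds.
have G_ge2 : 2 <= (fib n)%:R :> R.
  by rewrite (ler_nat _ 2); case: n n_ge3 {m_le} => [|[|n]] // n_ge3; have := fib_ge n; lia.
have M_le : m%:R <= (fib n.+1)%:R + 1 :> R by rewrite -(natrD _ _ 1) ler_nat.
have M_ge1 : 1 <= m%:R :> R by rewrite (ler_nat _ 1).
have F_ge1 : 1 <= (fib n.+1)%:R :> R by rewrite (ler_nat _ 1) fib_gt0.
rewrite fibSS natrD ltr_norml; apply/andP; split; nra.
Qed.

Lemma floor_mulphi_small (m : nat) : (m <= 6)%N ->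
  Num.floor (m%:R * ph) = (nth 0 [:: 0; 1; 3; 4; 6; 8; 9] m)%N.
Proof.
have [ph_lb ph_ub] := phi_bounds.
move=> m_le; apply: floor_def; rewrite intrD -!pmulrn.
by case: m m_le => [|[|[|[|[|[|[|m]]]]]]] // _; apply/andP; split; rewrite /=; lra.
Qed.

Lemma floor_fib_add (n m : nat) : (2 <= n)%N -> (0 < m <= fib n + 1)%N ->
  Num.floor ((fib n.+1 + m)%:R * ph) = (fib n.+2)%:Z + Num.floor (m%:R * ph).
Proof.
move=> n_ge2 m_bd; have [n_small|n_ge4] := ltnP n 4.
  (* For n = 2, 3 the distance bound [conj_lt_fib] is too weak; compute instead. *)
  case: n n_ge2 n_small m_bd => [|[|[|[|n]]]] // _ _;
  by case: m => [|[|[|[|m]]]] // _; rewrite !floor_mulphi_small.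
case: n n_ge2 n_ge4 m_bd => [//|n] _ n_ge4 m_bd; move: (m_bd) => /andP[m_gt0 _].
set x := m%:R * ph; set e := (fib n.+2)%:R * ph - (fib n.+3)%:R.
have -> : (fib n.+2 + m)%:R * ph = (fib n.+3)%:~R + (x + e) by rewrite natrD /x /e; ring.
rewrite floorDzr ?intr_int // intrKfloor; congr (_ + _).
have ez := fib_phi_err n.+1; rewrite -/e in ez.
have [q_le q_gt] := (floor_le x, floorD1_gt x).
apply: floorD_small.
- rewrite -[x - _]ger0_norm ?subr_ge0 // [`|x - _|]distrC.
  apply: lt_dist_mulphi ez _ => //; apply: conj_lt_fib => //.
  by rewrite -/x; apply/andP; split; lra.
- rewrite -[_ - x]gtr0_norm ?subr_gt0 //.
  apply: lt_dist_mulphi ez _ => //; apply: conj_lt_fib => //.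
  by rewrite -/x intrD; apply/andP; split; rewrite -?intrD; lra.
Qed.

Lemma sumn_take_C1 n t : (2 <= n)%N -> (t <= fib n)%N ->
  (sumn (take t (C1 n)))%:Z = Num.floor (t.+1%:R * ph) - 1.
Proof.
pose P n := forall t, (t <= fib n)%N ->
  (sumn (take t (C1 n)))%:Z = Num.floor (t.+1%:R * ph) - 1.
suff P_ge2 : forall n, P n.+2 /\ P n.+3.
  by case: n => [|[|n]] // _; case: (P_ge2 n) => + _; apply.
clear n t; elim=> [|n [IH2 IH3]].
  by split=> -[|[|[|t]]] // _; rewrite floor_mulphi_small.
split=> // t t_le; rewrite C1_rec take_cat size_C1.
case: ltnP => [t_lt|t_ge]; first exact/IH3/ltnW.
have t_bd : (t - fib n.+3 <= fib n.+2)%N by move: t_le; rewrite fibSS; lia.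
rewrite sumn_cat sumn_C1 PoszD IH2 //.
have -> : t.+1 = (fib n.+3 + (t - fib n.+3).+1)%N by lia.
by rewrite floor_fib_add //; [rewrite addrA | apply/andP; split; lia].
Qed.

Lemma sumn_take_C1_floor n t : (0 < t <= fib n.+1)%N ->
  (sumn (take t (C1 n.+1)))%:Z =
  Num.floor ((fib n.+2 + 1 + t)%:R * ph) - Num.floor ((fib n.+2 + 1)%:R * ph).
Proof.
case: n => [|n] /andP[t_gt0 t_le].
  (* C1 1 = [:: 1] is the exception to [sumn_take_C1]. *)
  by case: t t_gt0 t_le => [|[|t]] // _ _; rewrite !floor_mulphi_small.
rewrite -addnA add1n !floor_fib_add //; last by rewrite addn1 ltnS.
  by rewrite sumn_take_C1 // (floor_mulphi_small 1) // [nth _ _ _]/=; lia.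
by rewrite leq_addl.
Qed.
End GoldenRatio.

Theorem theorem5p1 (R : realType) (k : nat) (hk : (1 <= k)%N)
  (n : nat) (hn : (1 <= n)%N) (h t : nat)
  (hh : (h <= k - 1)%N) (ht1 : (1 <= t)%N) (ht2 : (t <= fib n)%N) :
  let idx := (k * (fib n.+1 - 1) + h * fib n + t + 1)%N in
  let fl := Num.floor (((fib n.+1 + 1 + t)%:R : R) * phi R)
          - Num.floor (((fib n.+1 + 1)%:R : R) * phi R) in
  ((a_seq k idx)%:Z = (k * fib n.+2)%:Z - k%:Z + 1 + (h * fib n.+1)%:Z + fl)
  /\
  ((b_seq k idx)%:Z = (k * fib n.+3)%:Z + (h * fib n.+2)%:Z - k%:Z + t%:Z + 2 + fl).
Proof.
case: n hn ht2 => [//|n] _ ht2 idx fl.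
have hk' : (h < k)%N by lia.
have <- : (sumn (take t (C1 n.+1)))%:Z = fl by apply: sumn_take_C1_floor; rewrite ht1.
have idxE : idx = (size (cprefix k n) + h * fib n.+1 + t).+1.
  by rewrite /idx mulnBr muln1; have := size_cprefix k n; lia.
have a_idx := @a_seq_block k n h t hk hk' ht2.
have [sum_pre size_pre] := (sumn_cprefix k n, size_cprefix k n).
have fibk : (k * fib n.+4 = k * fib n.+3 + k * fib n.+2)%N by rewrite -mulnDr.
have fibh : (h * fib n.+3 = h * fib n.+2 + h * fib n.+1)%N by rewrite -mulnDr.
rewrite idxE b_seqE a_idx; split; lia.
Qed.
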